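(* Let $D\ge1$, let $F:\mathbb R\to\mathbb R^+$ be strictly decreasing with $A(\alpha):=\int_{\mathbb R^D}F(\frac12|v|^2+\alpha)\,dv<\infty$ for all $\alpha\in\mathbb R$, let $b:=-A^{-1}:(0,\infty)\to\mathbb R$, and let $B\in C^1(0,\infty)$ satisfy $B'=b$, with $\lim_{s\to0^+}B(s)$ existing and $B(0):=\lim_{s\to 0^+}B(s)=0$. Then: (i) $\inf_{s\ge 0}B(s)$ is finite; (ii) $\inf_{s>0}s\,b(s)$ is finite, and for every $s>0$, $s\,b_-(s)\le B_-(s)$.
   Context: Under the assumptions on $F$, $A$ is a continuous strictly decreasing bijection of $\mathbb R$ onto $(0,\infty)$, so $A^{-1}:(0,\infty)\to\mathbb R$ is well defined (and strictly decreasing, so $B$ is strictly convex). For a real number $x$, $x_-:=\max\{-x,0\}$ denotes the negative part. *)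

From HB Require Import structures.
From mathcomp Require Import all_boot all_order all_algebra.
From mathcomp Require Import all_classical all_reals all_analysis.
Set Implicit Arguments. Unset Strict Implicit. Unset Printing Implicit Defensive.
Import Order.TTheory GRing.Theory Num.Theory.
Import numFieldNormedType.Exports.
Local Open Scope classical_set_scope.
Local Open Scope ring_scope.

(* Integral over R^D of a NONNEGATIVE function,
   points of R^D being represented as sequences of length D.
   Defined as the D-fold iterated Lebesgue integral, which by Tonelli
   equals the integral w.r.t. D-dimensional Lebesgue measure for
   nonnegative measurable integrands. *)
Fixpoint int_RD (R : realType) (D : nat) (f : seq R -> \bar R) : \bar R :=
  match D with
  | 0%N => f [::]
  | D'.+1 => (\int[@lebesgue_measure R]_x int_RD D' (fun t => f (x :: t)))%E
  end.

Definition sqnorm (R : realType) (v : seq R) : R := \sum_(x <- v) x ^+ 2.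

Definition Afun (R : realType) (D : nat) (F : R -> R) (alpha : R) : \bar R :=
  int_RD D (fun v => (F (sqnorm v / 2 + alpha))%:E).

Definition negpart (R : realType) (x : R) : R := Num.max (- x) 0.

From HB Require Import structures.
From mathcomp Require Import all_boot all_order all_algebra.
From mathcomp Require Import all_classical all_reals all_analysis.
From mathcomp Require Import lra.
Set Implicit Arguments. Unset Strict Implicit. Unset Printing Implicit Defensive.
Import Order.TTheory GRing.Theory Num.Theory.
Import numFieldNormedType.Exports.
Local Open Scope classical_set_scope.
Local Open Scope ring_scope.

(* Since F is decreasing, A is nonincreasing, so b = -A^{-1} is nondecreasing
   and B is convex on (0,oo).  Convexity bounds B below by its supporting
   lines; the line at s, evaluated at 0+, gives B s <= s b s because B(0+) = 0.
   Finally b becomes nonnegative beyond A(0), so the supporting line at such a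
   point gives a lower bound for B on [0,oo). *)

Section int_RD_monotone.
Variable R : realType.
Local Open Scope ereal_scope.

Lemma int_RD_ge0 (D : nat) (f : seq R -> \bar R) :
  (forall v, 0 <= f v) -> 0 <= int_RD D f.
Proof.
elim: D f => [|D' IH] f f0 //=.
by apply: integral_ge0 => x _; apply: IH.
Qed.

(* The iterated integrands need not be measurable, so the integrals are
   compared as suprema over simple functions. *)
Lemma le_int_RD (D : nat) (f g : seq R -> \bar R) :
  (forall v, 0 <= f v) -> (forall v, f v <= g v) -> int_RD D f <= int_RD D g.
Proof.
elim: D f g => [|D' IH] f g f0 fg //=.
have f'0 x : 0 <= int_RD D' (fun t => f (x :: t)) by exact: int_RD_ge0.
have fg' x : int_RD D' (fun t => f (x :: t)) <= int_RD D' (fun t => g (x :: t)).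
  by apply: IH.
rewrite !ge0_integralTE //; last by move=> x; exact: le_trans (fg' x).
apply: ereal_sup_le => _ [h hf <-]; exists h => // x.
exact: le_trans (hf x) (fg' x).
Qed.

End int_RD_monotone.

Lemma Afun_ge0 (R : realType) (D : nat) (F : R -> R) alpha :
  (forall x, 0 <= F x) -> (0 <= Afun D F alpha)%E.
Proof. by move=> F0; apply: int_RD_ge0 => v; rewrite lee_fin. Qed.

Lemma Afun_le (R : realType) (D : nat) (F : R -> R) alpha beta :
  (forall x, 0 <= F x) -> {homo F : x y /~ x <= y} ->
  alpha <= beta -> (Afun D F beta <= Afun D F alpha)%E.
Proof.
move=> F0 Fnoninc ab; apply: le_int_RD => v; rewrite lee_fin //.
by apply: Fnoninc; rewrite lerD2l.
Qed.

Section inverse_of_nonincreasing.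
Variables (R : realType) (A : R -> \bar R) (b : R -> R).
Hypothesis A_noninc : forall x y, x <= y -> (A y <= A x)%E.
Hypothesis Ab : forall s, 0 < s -> A (- b s) = s%:E.

Lemma inverse_nondecreasing s t : 0 < s -> s <= t -> b s <= b t.
Proof.
move=> s0 st; rewrite leNgt; apply/negP => bts.
have t0 : 0 < t by exact: lt_le_trans st.
have := @A_noninc (- b s) (- b t); rewrite lerN2 ltW // => /(_ isT).
rewrite Ab // Ab // lee_fin => ts.
by move: bts; rewrite (@le_anti _ _ s t) ?st ?ts // ltxx.
Qed.

Lemma inverse_ge0 s : (A 0 < s%:E)%E -> 0 < s -> 0 <= b s.
Proof.
move=> A0s s0; rewrite leNgt; apply/negP => bs0.
have := @A_noninc 0 (- b s); rewrite Ab // oppr_ge0 ltW //.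
by move=> /(_ isT); rewrite leNgt A0s.
Qed.

End inverse_of_nonincreasing.

Section nondecreasing_derivative.
Variables (R : realType) (B b : R -> R).
Hypothesis B_derive : forall s : R, 0 < s -> is_derive s 1 B (b s).
Hypothesis b_nondecr : forall s t : R, 0 < s -> s <= t -> b s <= b t.

Lemma increment_bounds x y : 0 < x -> x < y ->
  (y - x) * b x <= B y - B x <= (y - x) * b y.
Proof.
move=> x0 xy.
have [c] : exists2 c, c \in `]x, y[ & B y - B x = b c * (y - x).
  apply: MVT => // [z|].
    by rewrite in_itv /= => /andP[xz _]; apply: B_derive; exact: lt_trans xz.
  apply: derivable_within_continuous => z; rewrite in_itv /= => /andP[xz _].
  by apply: ex_derive; apply: B_derive; exact: lt_le_trans xz.
rewrite in_itv /= => /andP[xc cy] ->.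
have yx : 0 <= y - x by rewrite subr_ge0 ltW.
rewrite [b c * _]mulrC; apply/andP; split; apply: ler_wpM2l => //.
- by apply: b_nondecr => //; exact: ltW.
- by apply: b_nondecr; [exact: lt_trans xc | exact: ltW].
Qed.

Lemma supporting_line_le s t : 0 < s -> 0 < t -> B t + (s - t) * b t <= B s.
Proof.
move=> s0 t0; case: (ltgtP s t) => [st|ts|->]; last by rewrite subrr mul0r addr0.
- have /andP[_] := increment_bounds s0 st.
  by rewrite !mulrBl; lra.
- by have /andP[+ _] := increment_bounds t0 ts; lra.
Qed.

Lemma supporting_line0_le t s : 0 < t -> 0 <= b t -> 0 < s ->
  B t - t * b t <= B s.
Proof.
move=> t0 bt0 s0; apply: le_trans (supporting_line_le s0 t0).
have : 0 <= s * b t by rewrite mulr_ge0 // ltW.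
by rewrite mulrBl; lra.
Qed.

Hypothesis B_cvg0 : B e @[e --> (0:R)^'+] --> (0:R).

Lemma le_mul_derive s : 0 < s -> B s <= s * b s.
Proof.
move=> s0; rewrite -subr_le0.
have : (B e - e * b s) @[e --> (0:R)^'+] --> 0 - 0 * b s.
  apply: cvgB => //.
  by apply: cvgMr_tmp; exact: cvg_at_right_filter cvg_id.
rewrite mul0r subr0 => /cvgr_to_ge; apply.
near=> e.
have e0 : 0 < e by near: e; exact: nbhs_right_gt.
by have := supporting_line_le e0 s0; rewrite mulrBl; lra.
Unshelve. all: by end_near.
Qed.

End nondecreasing_derivative.

Lemma negpart_pM (R : realType) (s x : R) :
  0 <= s -> negpart (s * x) = s * negpart x.
Proof. by move=> s0; rewrite /negpart maxr_pMr // mulr0 mulrN. Qed.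

Lemma negpart_le (R : realType) (x y : R) : x <= y -> negpart y <= negpart x.
Proof. by move=> xy; rewrite /negpart le_max2 // lerN2. Qed.

Theorem mainTheorem2 (R : realType) (D : nat) (F b B : R -> R) :
  (1 <= D)%N ->
  (forall x : R, 0 < F x) ->
  (forall x y : R, x < y -> F y < F x) ->
  (forall alpha : R, (Afun D F alpha < +oo)%E) ->
  (* b = - A^{-1} on (0,oo) *)
  (forall s : R, 0 < s -> Afun D F (- b s) = s%:E) ->
  (* B in C^1(0,oo) with B' = b *)
  (forall s : R, 0 < s -> is_derive s (1 : R) B (b s)) ->
  (forall s : R, 0 < s -> {for s, continuous b}) ->
  (* lim_{s->0+} B(s) exists and equals B(0) := 0 *)
  B s @[s --> (0:R)^'+] --> (0:R) ->
  B 0 = 0 ->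
  has_lbound [set B s | s in [set s : R | 0 <= s]] /\
  (has_lbound [set s * b s | s in [set s : R | 0 < s]] /\
   forall s : R, 0 < s -> s * negpart (b s) <= negpart (B s)).
Proof.
move=> _ F_gt0 F_decr A_fin Ab B_derive _ B_cvg0 B00.
have F_ge0 x : 0 <= F x by exact: ltW.
have A_noninc x y : x <= y -> (Afun D F y <= Afun D F x)%E.
  move=> xy; apply: Afun_le => // u v.
  by rewrite le_eqVlt => /predU1P[->|/F_decr/ltW].
have b_nondecr := inverse_nondecreasing A_noninc Ab.
have B_le := le_mul_derive B_derive b_nondecr B_cvg0.
pose s1 := fine (Afun D F 0) + 1.
have A0_lt_s1 : (Afun D F 0 < s1%:E)%E.
  by rewrite -[X in (X < _)%E]fineK ?ge0_fin_numE ?A_fin ?Afun_ge0 // lte_fin ltrDl.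
have s1_gt0 : 0 < s1.
  by rewrite -lte_fin; exact: le_lt_trans (Afun_ge0 _ _ F_ge0) A0_lt_s1.
have bs1_ge0 : 0 <= b s1 := inverse_ge0 A_noninc Ab A0_lt_s1 s1_gt0.
pose L := Num.min 0 (B s1 - s1 * b s1).
have L_le_B s : 0 <= s -> L <= B s.
  rewrite le_eqVlt => /predU1P[<-|s0]; first by rewrite B00 ge_min lexx.
  by rewrite ge_min (supporting_line0_le B_derive b_nondecr) ?orbT.
split; [|split].
- by exists L => _ [s s0 <-]; exact: L_le_B.
- by exists L => _ [s s0 <-]; exact: le_trans (L_le_B s (ltW s0)) (B_le s s0).
- move=> s s0; rewrite -negpart_pM; last exact: ltW.
  by apply: negpart_le; exact: B_le.
Qed.
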